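(* Let $b\ge1$ be an integer, $t\ge0$ an integer and $d=2t+1$. Let $\nu^{\text{on-diag}}$ be the number of pairs $(k,q)$ with $k$ odd, $1\le k<d$, $0\le q\le k$, $q\equiv0\pmod{2b}$. Then $\nu^{\text{on-diag}}=\tfrac{t^2}{2b}+\tfrac{t}{2}+c$, where $c=\tfrac{1}{2b}[t]_b\big([t]_b-2[t-\tfrac12]_b+b-1\big)$, and $0\le c\le b$.
   Context: For real $x$ and positive integer $y$, $[x]_y:=x\bmod y=x-y\lfloor x/y\rfloor$. *)

From Stdlib Require Import Reals Lra Lia Arith List Bool.
Import ListNotations.
Open Scope R_scope.

Definition rfloor (x : R) : Z := Int_part x.

(* [x]_y := x mod y = x - y * floor(x / y), for real x and positive integer y *)
Definition rmod (x : R) (y : nat) : R := x - INR y * IZR (rfloor (x / INR y)).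

Definition nu_ondiag (b t : nat) : nat :=
  let d := (2 * t + 1)%nat in
  length (filter (fun p : nat * nat =>
      let '(k, q) := p in
      Nat.odd k && Nat.leb 1 k && Nat.ltb k d && Nat.leb q k
      && Nat.eqb (q mod (2 * b)) 0)
    (list_prod (seq 0 d) (seq 0 d))).

Definition c_const (b t : nat) : R :=
  / (2 * INR b) * rmod (INR t) b
    * (rmod (INR t) b - 2 * rmod (INR t - / 2) b + INR b - 1).

(* For odd k = 2j+1 < d the admissible q are the multiples of 2b in [0, k],
   of which there are (2j+1)/(2b) + 1 = j/b + 1.  Summing over j < t and
   inducting on t gives 2b nu = t^2 + b t + r (b - r) with r = t mod b.  When
   r >= 1 one has [t - 1/2]_b = r - 1/2, so c = r (b - r) / (2b), which lies
   between 0 and b/8. *)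

From Stdlib Require Import Reals Lra Lia Arith List Bool.
Import ListNotations.
Open Scope R_scope.

Lemma succ_div_mod_cases (n m : nat) : (0 < m)%nat ->
  (S (n mod m) = m /\ S n / m = S (n / m) /\ S n mod m = 0)%nat \/
  (S (n mod m) < m /\ S n / m = n / m /\ S n mod m = S (n mod m))%nat.
Proof.
  intros Hm.
  pose proof (Nat.div_mod_eq n m) as Hn.
  pose proof (Nat.mod_upper_bound n m ltac:(lia)) as Hr.
  destruct (Nat.eq_dec (S (n mod m)) m) as [Hmax | Hlt]; [left | right];
    repeat split; try lia.
  - symmetry; apply (Nat.div_unique _ _ _ 0); lia.
  - symmetry; apply (Nat.mod_unique _ _ (S (n / m))); lia.
  - symmetry; apply (Nat.div_unique _ _ _ (S (n mod m))); lia.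
  - symmetry; apply (Nat.mod_unique _ _ (n / m)); lia.
Qed.

Lemma count_multiples_seq (m N : nat) : (0 < m)%nat ->
  length (filter (fun q => q mod m =? 0) (seq 0 (S N))) = (N / m + 1)%nat.
Proof.
  intros Hm. induction N as [|N IH].
  - cbn [seq filter]. rewrite Nat.Div0.mod_0_l, Nat.Div0.div_0_l. reflexivity.
  - rewrite seq_S, filter_app, length_app, IH. cbn [plus filter].
    destruct (succ_div_mod_cases N m Hm) as [(_ & Hq & Hr) | (_ & Hq & Hr)];
      rewrite Hq, Hr; simpl; lia.
Qed.

Lemma count_multiples_upto (m k d : nat) : (0 < m)%nat -> (k < d)%nat ->
  length (filter (fun q => (q <=? k) && (q mod m =? 0)) (seq 0 d))
  = (k / m + 1)%nat.
Proof.
  intros Hm Hkd.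
  replace d with (S k + (d - S k))%nat by lia.
  rewrite seq_app, filter_app, length_app.
  rewrite (filter_ext_in _ (fun q => q mod m =? 0) (seq 0 (S k))),
    (filter_ext_in _ (fun _ => false) (seq (0 + S k) _)), filter_false,
    count_multiples_seq.
  - simpl. lia.
  - exact Hm.
  - intros q Hq%in_seq. apply andb_false_intro1, Nat.leb_gt. lia.
  - intros q Hq%in_seq. replace (q <=? k)%nat with true; [reflexivity |].
    symmetry. apply Nat.leb_le. lia.
Qed.

Lemma length_filter_list_prod (A B : Type) (f : A * B -> bool)
    (l1 : list A) (l2 : list B) :
  length (filter f (list_prod l1 l2))
  = list_sum (map (fun x => length (filter (fun y => f (x, y)) l2)) l1).
Proof.
  induction l1 as [|x l1 IH]; simpl; [reflexivity|].
  rewrite filter_app, length_app, IH. f_equal.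
  clear. induction l2 as [|y l2 IH]; simpl; [reflexivity|].
  destruct (f (x, y)); simpl; rewrite IH; reflexivity.
Qed.

Lemma odd_div_double (j b : nat) : ((2 * j + 1) / (2 * b) = j / b)%nat.
Proof.
  rewrite <- Nat.Div0.div_div. f_equal.
  symmetry; apply (Nat.div_unique _ _ _ 1); lia.
Qed.

Section OnDiagonalCount.

Variable b : nat.
Hypothesis b_pos : (0 < b)%nat.

Lemma nu_ondiag_sum (t : nat) :
  nu_ondiag b t = list_sum (map (fun k =>
    if Nat.odd k then (k / (2 * b) + 1)%nat else 0%nat) (seq 0 (2 * t + 1))).
Proof.
  unfold nu_ondiag. rewrite length_filter_list_prod. f_equal.
  apply map_ext_in. intros k Hk%in_seq.
  destruct (Nat.odd k) eqn:Hodd.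
  - assert (Hk1 : (1 <=? k)%nat = true)
      by (apply Nat.leb_le; destruct k; [discriminate | lia]).
    assert (Hkd : (k <? 2 * t + 1)%nat = true) by (apply Nat.ltb_lt; lia).
    rewrite (filter_ext _ (fun q => (q <=? k) && (q mod (2 * b) =? 0)))
      by (intros q; cbv beta iota; rewrite Hk1, Hkd; reflexivity).
    apply count_multiples_upto; lia.
  - rewrite (filter_ext _ (fun _ => false)), filter_false
      by reflexivity.
    reflexivity.
Qed.

Lemma nu_ondiag_succ (t : nat) :
  nu_ondiag b (S t) = (nu_ondiag b t + (t / b + 1))%nat.
Proof.
  rewrite !nu_ondiag_sum.
  replace (2 * S t + 1)%nat with (2 * t + 1 + 2)%nat by lia.
  rewrite seq_app, map_app, list_sum_app. f_equal.
  replace (seq (0 + (2 * t + 1)) 2) with [2 * t + 1; 2 * (t + 1)]%nat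
    by (simpl; f_equal; f_equal; lia).
  assert (Hodd : Nat.odd (2 * t + 1) = true)
    by (apply Nat.odd_spec; exists t; reflexivity).
  assert (Heven : Nat.odd (2 * (t + 1)) = false)
    by (rewrite Nat.odd_mul; reflexivity).
  cbn [map list_sum fold_right]. rewrite Hodd, Heven, odd_div_double. lia.
Qed.

Lemma nu_ondiag_closed_form (t : nat) :
  (2 * b * nu_ondiag b t
   = t * t + b * t + (t mod b) * (b - t mod b))%nat.
Proof.
  induction t as [|t IH].
  - change (nu_ondiag b 0) with 0%nat. rewrite Nat.Div0.mod_0_l. lia.
  - rewrite nu_ondiag_succ, Nat.mul_add_distr_l, IH.
    pose proof (Nat.div_mod_eq t b) as Ht.
    destruct (succ_div_mod_cases t b b_pos) as [(Hmax & _ & Hr) | (Hlt & _ & Hr)];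
      rewrite Hr.
    + replace (t mod b) with (b - 1)%nat in * by lia. nia.
    + replace (b - S (t mod b))%nat with (b - t mod b - 1)%nat by lia.
      nia.
Qed.

Lemma rmod_unique (x y : R) (m : Z) :
  0 <= y < INR b -> x = INR b * IZR m + y -> rmod x b = y.
Proof.
  intros Hy Hx.
  assert (Hb : 0 < INR b) by (apply lt_0_INR; exact b_pos).
  assert (Hq : x / INR b = IZR m + y / INR b) by (rewrite Hx; field; lra).
  assert (Hfrac : 0 <= y / INR b < 1).
  { assert (y = INR b * (y / INR b)) by (field; lra). nra. }
  unfold rmod, rfloor.
  rewrite <- (Int_part_spec (x / INR b) m) by lra.
  lra.
Qed.

Lemma rmod_INR (t : nat) : rmod (INR t) b = INR (t mod b).
Proof.
  apply (rmod_unique _ _ (Z.of_nat (t / b))).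
  - split; [apply pos_INR | apply lt_INR, Nat.mod_upper_bound; lia].
  - rewrite <- INR_IZR_INZ, <- mult_INR, <- plus_INR, <- Nat.div_mod_eq.
    reflexivity.
Qed.

Lemma rmod_INR_sub_half (t : nat) : (0 < t mod b)%nat ->
  rmod (INR t - / 2) b = INR (t mod b) - / 2.
Proof.
  intros Hr.
  apply (rmod_unique _ _ (Z.of_nat (t / b))).
  - assert (1 <= INR (t mod b)) by (apply (le_INR 1); lia).
    assert (INR (t mod b) < INR b)
      by (apply lt_INR, Nat.mod_upper_bound; lia).
    lra.
  - rewrite <- INR_IZR_INZ, (Nat.div_mod_eq t b) at 1.
    rewrite plus_INR, mult_INR. ring.
Qed.

Lemma c_const_eq (t : nat) :
  c_const b t = INR (t mod b) * (INR b - INR (t mod b)) / (2 * INR b).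
Proof.
  assert (Hb : 0 < INR b) by (apply lt_0_INR; exact b_pos).
  unfold c_const. rewrite rmod_INR.
  destruct (Nat.eq_dec (t mod b) 0) as [H0 | Hr].
  - rewrite H0. simpl. field. lra.
  - rewrite rmod_INR_sub_half by lia. field. lra.
Qed.

End OnDiagonalCount.

Theorem lemmaS11 (b t : nat) (hb : (1 <= b)%nat) :
  INR (nu_ondiag b t) = INR t ^ 2 / (2 * INR b) + INR t / 2 + c_const b t
  /\ 0 <= c_const b t <= INR b.
Proof.
  assert (Hb : 0 < INR b) by (apply lt_0_INR; lia).
  assert (Hr : (t mod b < b)%nat) by (apply Nat.mod_upper_bound; lia).
  assert (Hclosed := f_equal INR (nu_ondiag_closed_form b hb t)).
  rewrite !mult_INR, !plus_INR, !mult_INR, minus_INR in Hclosed by lia.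
  rewrite (c_const_eq b hb).
  set (r := INR (t mod b)) in *.
  assert (0 <= r) by apply pos_INR.
  assert (r < INR b) by (apply lt_INR; exact Hr).
  set (c := r * (INR b - r) / (2 * INR b)).
  assert (Hc : 2 * INR b * c = r * (INR b - r)) by (unfold c; field; lra).
  split; [| split]; try nra.
  apply (Rmult_eq_reg_l (2 * INR b)); [| lra].
  replace (INR 2) with 2 in Hclosed by (simpl; lra).
  rewrite Hclosed. unfold c. field. lra.
Qed.
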